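(* Let $M$ be a simply-connected domain in $\mathbb{R}^2(u,v)$, let $\omega,H,Q,R:M\to\mathbb{R}$ be smooth, and let $\Phi=(\Phi_1,\Phi_2)$ and $\Psi=(\Psi_1,\Psi_2)$, $M\to\mathrm{SL}_2\mathbb{R}\times\mathrm{SL}_2\mathbb{R}$, solve the Lax systems (L1) and (L2) below, respectively. Write $\Phi_1=\begin{pmatrix}\Phi_{11}&\Phi_{12}\\\Phi_{13}&\Phi_{14}\end{pmatrix}$, $\Phi_2=\begin{pmatrix}\Phi_{21}&\Phi_{22}\\\Phi_{23}&\Phi_{24}\end{pmatrix}$, and similarly for $\Psi$. Define the projected hyperbolic Gauss maps $G^+_\Phi=\big(\tfrac{\Phi_{11}}{\Phi_{13}},\tfrac{\Phi_{21}}{\Phi_{23}}\big)$, $G^-_\Phi=\big(\tfrac{\Phi_{12}}{\Phi_{14}},\tfrac{\Phi_{22}}{\Phi_{24}}\big)$, $G^+_\Psi=\big(\tfrac{\Psi_{11}}{\Psi_{13}},-\tfrac{\Psi_{24}}{\Psi_{22}}\big)$, $G^-_\Psi=\big(\tfrac{\Psi_{12}}{\Psi_{14}},-\tfrac{\Psi_{23}}{\Psi_{21}}\big)$, each considered on an open set $W\subset M$ where its denominators do not vanish. Then on such $W$: (1) $\partial_uG^+_\Phi\equiv0$ (resp. $\partial_uG^+_\Psi\equiv0$) iff $H\equiv1$ and $Q\equiv0$; (2) $\partial_vG^+_\Phi\equiv0$ (resp. $\partial_vG^+_\Psi\equiv0$) iff $H\equiv1$ and $R\equiv0$; (3) $\partial_uG^-_\Phi\equiv0$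 (resp. $\partial_uG^-_\Psi\equiv0$) iff $H\equiv-1$ and $Q\equiv0$; (4) $\partial_vG^-_\Phi\equiv0$ (resp. $\partial_vG^-_\Psi\equiv0$) iff $H\equiv-1$ and $R\equiv0$.
   Context: (L1): $(\Phi_1)_u=\Phi_1\mathcal U_1$, $(\Phi_1)_v=\Phi_1\mathcal V_1$, $(\Phi_2)_u=\Phi_2\mathcal U_2$, $(\Phi_2)_v=\Phi_2\mathcal V_2$ with $\mathcal U_1=\begin{pmatrix}\frac{\omega_u}{4}&\frac12e^{\omega/2}(H+1)\\-e^{-\omega/2}Q&-\frac{\omega_u}{4}\end{pmatrix}$, $\mathcal V_1=\begin{pmatrix}-\frac{\omega_v}{4}&e^{-\omega/2}R\\-\frac12e^{\omega/2}(H-1)&\frac{\omega_v}{4}\end{pmatrix}$, $\mathcal U_2=\begin{pmatrix}-\frac{\omega_u}{4}&e^{-\omega/2}Q\\-\frac12e^{\omega/2}(H-1)&\frac{\omega_u}{4}\end{pmatrix}$, $\mathcal V_2=\begin{pmatrix}\frac{\omega_v}{4}&\frac12e^{\omega/2}(H+1)\\-e^{-\omega/2}R&-\frac{\omega_v}{4}\end{pmatrix}$. (L2): $(\Psi_1)_u=\Psi_1\mathcal U_1$, $(\Psi_1)_v=\Psi_1\mathcal V_1$ (same $\mathcal U_1,\mathcal V_1$), $(\Psi_2)_u=\Psi_2\begin{pmatrix}\frac{\omega_u}{4}&\frac12e^{\omega/2}(H-1)\\-e^{-\omega/2}Q&-\frac{\omega_u}{4}\end{pmatrix}$, $(\Psi_2)_v=\Psi_2\begin{pmatrix}-\frac{\omega_v}{4}&e^{-\omega/2}R\\-\frac12e^{\omega/2}(H+1)&\frac{\omega_v}{4}\end{pmatrix}$.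 These are the frames of the timelike surfaces $\varphi=\Phi_1\Phi_2^t$ and $\psi=\Psi_1\Psi_2^{-1}$ in $\mathbb{H}^3_1(-1)\cong\mathrm{SL}_2\mathbb{R}$ with metric $e^\omega du\,dv$, mean curvature $H$ and Hopf pairs $Q,R$; $G^\pm$ are the images of the null lines $[\varphi\pm N]$ in $\mathbb{R}^2(u,v)$. A map with $\partial_u=0$ is called Lorentz antiholomorphic, with $\partial_v=0$ Lorentz holomorphic. *)

From Stdlib Require Import Reals List.
From Coquelicot Require Import Coquelicot.
Open Scope R_scope.

(** * Sets and functions on R^2(u,v) are curried: [M : R -> R -> Prop], [f : R -> R -> R]. *)

Definition open2 (M : R -> R -> Prop) : Prop :=
  open (fun p : R * R => M (fst p) (snd p)).

(** A continuous map [R -> R*R] / [R -> R -> R*R]; continuous maps on [0,1]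
    (resp. [0,1]^2) all extend continuously to R (resp. R^2) by clamping,
    so quantifying over globally continuous maps is faithful. *)
Definition cont_path (g : R -> R * R) : Prop := forall t : R, continuous g t.
Definition cont_homotopy (h : R -> R -> R * R) : Prop :=
  forall p : R * R, continuous (fun q : R * R => h (fst q) (snd q)) p.

Definition path_in (M : R -> R -> Prop) (g : R -> R * R) : Prop :=
  cont_path g /\ forall t, 0 <= t <= 1 -> M (fst (g t)) (snd (g t)).

Definition path_connected2 (M : R -> R -> Prop) : Prop :=
  forall a b : R * R, M (fst a) (snd a) -> M (fst b) (snd b) ->
    exists g, path_in M g /\ g 0 = a /\ g 1 = b.

Definition loops_contractible (M : R -> R -> Prop) : Prop :=
  forall g, path_in M g -> g 0 = g 1 ->
    exists h : R -> R -> R * R, cont_homotopy h /\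
      (forall s t, 0 <= s <= 1 -> 0 <= t <= 1 -> M (fst (h s t)) (snd (h s t))) /\
      (forall s, 0 <= s <= 1 -> h s 0 = g s /\ h s 1 = g 0) /\
      (forall t, 0 <= t <= 1 -> h 0 t = g 0 /\ h 1 t = g 0).

Definition simply_connected_domain (M : R -> R -> Prop) : Prop :=
  (exists u v, M u v) /\ open2 M /\ path_connected2 M /\ loops_contractible M.

(** * Smoothness (C^infinity on an open set) via iterated partial derivatives.
    [true] = partial in u, [false] = partial in v. *)
Fixpoint iter_partial (l : list bool) (f : R -> R -> R) : R -> R -> R :=
  match l with
  | nil => f
  | b :: l' =>
      let g := iter_partial l' f in
      if b then (fun u v => Derive (fun x => g x v) u)
           else (fun u v => Derive (fun y => g u y) v)
  end.

Definition smooth_on (M : R -> R -> Prop) (f : R -> R -> R) : Prop :=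
  forall (l : list bool) (u v : R), M u v ->
    ex_derive (fun x => iter_partial l f x v) u /\
    ex_derive (fun y => iter_partial l f u y) v /\
    continuous (fun p : R * R => iter_partial l f (fst p) (snd p)) (u, v).

Definition du (f : R -> R -> R) : R -> R -> R := fun u v => Derive (fun x => f x v) u.
Definition dv (f : R -> R -> R) : R -> R -> R := fun u v => Derive (fun y => f u y) v.

(** * 2x2 real matrices, entries numbered as in the paper:
      ( m1 m2 )
      ( m3 m4 ) *)
Record mat2 := Mat2 { m1 : R; m2 : R; m3 : R; m4 : R }.

Definition mmul (A B : mat2) : mat2 :=
  Mat2 (m1 A * m1 B + m2 A * m3 B) (m1 A * m2 B + m2 A * m4 B)
       (m3 A * m1 B + m4 A * m3 B) (m3 A * m2 B + m4 A * m4 B).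

Definition det2 (A : mat2) : R := m1 A * m4 A - m2 A * m3 A.

Definition SL2_valued (M : R -> R -> Prop) (F : R -> R -> mat2) : Prop :=
  forall u v, M u v -> det2 (F u v) = 1.

Definition lax_u (M : R -> R -> Prop) (F A : R -> R -> mat2) : Prop :=
  forall u v, M u v ->
    let D := mmul (F u v) (A u v) in
    is_derive (fun x => m1 (F x v)) u (m1 D) /\ is_derive (fun x => m2 (F x v)) u (m2 D) /\
    is_derive (fun x => m3 (F x v)) u (m3 D) /\ is_derive (fun x => m4 (F x v)) u (m4 D).

Definition lax_v (M : R -> R -> Prop) (F B : R -> R -> mat2) : Prop :=
  forall u v, M u v ->
    let D := mmul (F u v) (B u v) in
    is_derive (fun y => m1 (F u y)) v (m1 D) /\ is_derive (fun y => m2 (F u y)) v (m2 D) /\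
    is_derive (fun y => m3 (F u y)) v (m3 D) /\ is_derive (fun y => m4 (F u y)) v (m4 D).

Section LaxMatrices.
Variables (w H Q Rr : R -> R -> R).

Definition U1 : R -> R -> mat2 := fun u v =>
  Mat2 (du w u v / 4) (/2 * exp (w u v / 2) * (H u v + 1))
       (- exp (- w u v / 2) * Q u v) (- du w u v / 4).
Definition V1 : R -> R -> mat2 := fun u v =>
  Mat2 (- dv w u v / 4) (exp (- w u v / 2) * Rr u v)
       (- (/2) * exp (w u v / 2) * (H u v - 1)) (dv w u v / 4).
Definition U2 : R -> R -> mat2 := fun u v =>
  Mat2 (- du w u v / 4) (exp (- w u v / 2) * Q u v)
       (- (/2) * exp (w u v / 2) * (H u v - 1)) (du w u v / 4).
Definition V2 : R -> R -> mat2 := fun u v =>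
  Mat2 (dv w u v / 4) (/2 * exp (w u v / 2) * (H u v + 1))
       (- exp (- w u v / 2) * Rr u v) (- dv w u v / 4).
Definition U2' : R -> R -> mat2 := fun u v =>
  Mat2 (du w u v / 4) (/2 * exp (w u v / 2) * (H u v - 1))
       (- exp (- w u v / 2) * Q u v) (- du w u v / 4).
Definition V2' : R -> R -> mat2 := fun u v =>
  Mat2 (- dv w u v / 4) (exp (- w u v / 2) * Rr u v)
       (- (/2) * exp (w u v / 2) * (H u v + 1)) (dv w u v / 4).
End LaxMatrices.

Definition solves_L1 M w H Q Rr (P1 P2 : R -> R -> mat2) : Prop :=
  SL2_valued M P1 /\ SL2_valued M P2 /\
  lax_u M P1 (U1 w H Q) /\ lax_v M P1 (V1 w H Rr) /\
  lax_u M P2 (U2 w H Q) /\ lax_v M P2 (V2 w H Rr).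

Definition solves_L2 M w H Q Rr (S1 S2 : R -> R -> mat2) : Prop :=
  SL2_valued M S1 /\ SL2_valued M S2 /\
  lax_u M S1 (U1 w H Q) /\ lax_v M S1 (V1 w H Rr) /\
  lax_u M S2 (U2' w H Q) /\ lax_v M S2 (V2' w H Rr).

Definition GpPhi (P1 P2 : R -> R -> mat2) : (R -> R -> R) * (R -> R -> R) :=
  (fun u v => m1 (P1 u v) / m3 (P1 u v), fun u v => m1 (P2 u v) / m3 (P2 u v)).
Definition GmPhi (P1 P2 : R -> R -> mat2) : (R -> R -> R) * (R -> R -> R) :=
  (fun u v => m2 (P1 u v) / m4 (P1 u v), fun u v => m2 (P2 u v) / m4 (P2 u v)).
Definition GpPsi (S1 S2 : R -> R -> mat2) : (R -> R -> R) * (R -> R -> R) :=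
  (fun u v => m1 (S1 u v) / m3 (S1 u v), fun u v => - (m4 (S2 u v) / m2 (S2 u v))).
Definition GmPsi (S1 S2 : R -> R -> mat2) : (R -> R -> R) * (R -> R -> R) :=
  (fun u v => m2 (S1 u v) / m4 (S1 u v), fun u v => - (m3 (S2 u v) / m1 (S2 u v))).

Definition admissible (M W : R -> R -> Prop) (d1 d2 : R -> R -> R) : Prop :=
  open2 W /\ (forall u v, W u v -> M u v) /\
  (forall u v, W u v -> d1 u v <> 0 /\ d2 u v <> 0).

Definition du_vanishes (W : R -> R -> Prop) (G : (R -> R -> R) * (R -> R -> R)) : Prop :=
  forall u v, W u v ->
    is_derive (fun x => fst G x v) u 0 /\ is_derive (fun x => snd G x v) u 0.
Definition dv_vanishes (W : R -> R -> Prop) (G : (R -> R -> R) * (R -> R -> R)) : Prop :=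
  forall u v, W u v ->
    is_derive (fun y => fst G u y) v 0 /\ is_derive (fun y => snd G u y) v 0.

Definition const_on (W : R -> R -> Prop) (f : R -> R -> R) (c : R) : Prop :=
  forall u v, W u v -> f u v = c.

(** The theorem is pointwise: if a frame [F : R -> SL_2 R] satisfies [F' = F A],
    then the quotient rule and [det F = 1] give
    [(F_11 / F_13)' = - A_3 / F_13^2] and [(F_12 / F_14)' = A_2 / F_14^2],
    and similarly for the reciprocal ratios used in [G^±_Psi].  Hence each
    component of a Gauss map is stationary exactly where one off-diagonal entry
    of the corresponding Lax matrix vanishes, and these entries are positive
    multiples of [Q], [R] and [H ± 1]. *)

From Stdlib Require Import Reals Lra.
From Coquelicot Require Import Coquelicot.
Open Scope R_scope.

Lemma is_derive_eq0_iff (h : R -> R) (x l : R) :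
  is_derive h x l -> (is_derive h x 0 <-> l = 0).
Proof.
  intros Hl; split.
  - intros H0. apply is_derive_unique in Hl. apply is_derive_unique in H0.
    rewrite <- Hl, <- H0; reflexivity.
  - intros ->; exact Hl.
Qed.

Lemma is_derive_opp_eq0_iff (h : R -> R) (x : R) :
  is_derive (fun t => - h t) x 0 <-> is_derive h x 0.
Proof.
  split; intros Hd; apply is_derive_opp in Hd; unfold opp in Hd; simpl in Hd;
    rewrite Ropp_0 in Hd; [|exact Hd].
  eapply is_derive_ext; [|exact Hd]. intros t; apply Ropp_involutive.
Qed.

Lemma is_derive_div_eq0_iff (f g : R -> R) (x df dg : R) :
  is_derive f x df -> is_derive g x dg -> g x <> 0 ->
  (is_derive (fun t => f t / g t) x 0 <-> df * g x - f x * dg = 0).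
Proof.
  intros Hf Hg Hgx.
  rewrite (is_derive_eq0_iff _ _ _ (is_derive_div f g x df dg Hf Hg Hgx)).
  assert (Hg2 : g x ^ 2 <> 0) by (apply pow_nonzero; exact Hgx).
  split; intros HN.
  - replace (df * g x - f x * dg) with ((df * g x - f x * dg) / g x ^ 2 * g x ^ 2)
      by (field; exact Hgx).
    rewrite HN; ring.
  - rewrite HN; field; exact Hgx.
Qed.

Definition frame_derive (F : R -> mat2) (x : R) (A : mat2) : Prop :=
  let D := mmul (F x) A in
  is_derive (fun t => m1 (F t)) x (m1 D) /\ is_derive (fun t => m2 (F t)) x (m2 D) /\
  is_derive (fun t => m3 (F t)) x (m3 D) /\ is_derive (fun t => m4 (F t)) x (m4 D).

Lemma lax_u_frame_derive (M : R -> R -> Prop) (F A : R -> R -> mat2) (u v : R) :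
  lax_u M F A -> M u v -> frame_derive (fun x => F x v) u (A u v).
Proof. intros HF; exact (HF u v). Qed.

Lemma lax_v_frame_derive (M : R -> R -> Prop) (F B : R -> R -> mat2) (u v : R) :
  lax_v M F B -> M u v -> frame_derive (fun y => F u y) v (B u v).
Proof. intros HF; exact (HF u v). Qed.

Section FrameRatios.
Variables (F : R -> mat2) (x : R) (A : mat2).
Hypotheses (HF : frame_derive F x A) (Hdet : det2 (F x) = 1).

Lemma is_derive_ratio13_eq0_iff :
  m3 (F x) <> 0 -> (is_derive (fun t => m1 (F t) / m3 (F t)) x 0 <-> m3 A = 0).
Proof.
  destruct HF as [H1 [_ [H3 _]]]; intros Hz.
  rewrite (is_derive_div_eq0_iff _ _ _ _ _ H1 H3 Hz).
  replace (m1 (mmul (F x) A) * m3 (F x) - m1 (F x) * m3 (mmul (F x) A))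
    with (- m3 A * det2 (F x)) by (unfold det2, mmul; simpl; ring).
  rewrite Hdet; lra.
Qed.

Lemma is_derive_ratio24_eq0_iff :
  m4 (F x) <> 0 -> (is_derive (fun t => m2 (F t) / m4 (F t)) x 0 <-> m2 A = 0).
Proof.
  destruct HF as [_ [H2 [_ H4]]]; intros Hz.
  rewrite (is_derive_div_eq0_iff _ _ _ _ _ H2 H4 Hz).
  replace (m2 (mmul (F x) A) * m4 (F x) - m2 (F x) * m4 (mmul (F x) A))
    with (m2 A * det2 (F x)) by (unfold det2, mmul; simpl; ring).
  rewrite Hdet; lra.
Qed.

Lemma is_derive_neg_ratio42_eq0_iff :
  m2 (F x) <> 0 -> (is_derive (fun t => - (m4 (F t) / m2 (F t))) x 0 <-> m2 A = 0).
Proof.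
  destruct HF as [_ [H2 [_ H4]]]; intros Hz.
  rewrite (is_derive_opp_eq0_iff (fun t => m4 (F t) / m2 (F t))).
  rewrite (is_derive_div_eq0_iff _ _ _ _ _ H4 H2 Hz).
  replace (m4 (mmul (F x) A) * m2 (F x) - m4 (F x) * m2 (mmul (F x) A))
    with (- m2 A * det2 (F x)) by (unfold det2, mmul; simpl; ring).
  rewrite Hdet; lra.
Qed.

Lemma is_derive_neg_ratio31_eq0_iff :
  m1 (F x) <> 0 -> (is_derive (fun t => - (m3 (F t) / m1 (F t))) x 0 <-> m3 A = 0).
Proof.
  destruct HF as [H1 [_ [H3 _]]]; intros Hz.
  rewrite (is_derive_opp_eq0_iff (fun t => m3 (F t) / m1 (F t))).
  rewrite (is_derive_div_eq0_iff _ _ _ _ _ H3 H1 Hz).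
  replace (m3 (mmul (F x) A) * m1 (F x) - m3 (F x) * m1 (mmul (F x) A))
    with (m3 A * det2 (F x)) by (unfold det2, mmul; simpl; ring).
  rewrite Hdet; lra.
Qed.

End FrameRatios.

Lemma Rmult_eq0_iff_l (c X : R) : c <> 0 -> (c * X = 0 <-> X = 0).
Proof.
  intros Hc; split; [|intros ->; ring].
  intros HcX; destruct (Rmult_integral _ _ HcX); [contradiction|assumption].
Qed.

Lemma exp_mul_eq0_iff (a X : R) : exp a * X = 0 <-> X = 0.
Proof. apply Rmult_eq0_iff_l; pose proof (exp_pos a); lra. Qed.

Lemma neg_exp_mul_eq0_iff (a X : R) : - exp a * X = 0 <-> X = 0.
Proof. apply Rmult_eq0_iff_l; pose proof (exp_pos a); lra. Qed.

Lemma half_exp_mul_eq0_iff (a X : R) : / 2 * exp a * X = 0 <-> X = 0.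
Proof. apply Rmult_eq0_iff_l; pose proof (exp_pos a); lra. Qed.

Lemma neg_half_exp_mul_eq0_iff (a X : R) : - / 2 * exp a * X = 0 <-> X = 0.
Proof. apply Rmult_eq0_iff_l; pose proof (exp_pos a); lra. Qed.

Lemma vanishes_on_iff (W P Q1 Q2 : R -> R -> Prop) :
  (forall u v, W u v -> (P u v <-> Q1 u v /\ Q2 u v)) ->
  ((forall u v, W u v -> P u v) <->
   (forall u v, W u v -> Q1 u v) /\ (forall u v, W u v -> Q2 u v)).
Proof.
  intros HP; split.
  - intros HW; split; intros u v Wuv; apply (HP u v Wuv), HW, Wuv.
  - intros [H1 H2] u v Wuv; apply (HP u v Wuv); auto.
Qed.

Lemma du_vanishes_iff (W : R -> R -> Prop) (G : (R -> R -> R) * (R -> R -> R))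
    (f1 f2 : R -> R -> R) (k1 k2 : R) :
  (forall u v, W u v ->
     (is_derive (fun x => fst G x v) u 0 /\ is_derive (fun x => snd G x v) u 0
      <-> f1 u v = k1 /\ f2 u v = k2)) ->
  (du_vanishes W G <-> const_on W f1 k1 /\ const_on W f2 k2).
Proof. apply vanishes_on_iff. Qed.

Lemma dv_vanishes_iff (W : R -> R -> Prop) (G : (R -> R -> R) * (R -> R -> R))
    (f1 f2 : R -> R -> R) (k1 k2 : R) :
  (forall u v, W u v ->
     (is_derive (fun y => fst G u y) v 0 /\ is_derive (fun y => snd G u y) v 0
      <-> f1 u v = k1 /\ f2 u v = k2)) ->
  (dv_vanishes W G <-> const_on W f1 k1 /\ const_on W f2 k2).
Proof. apply vanishes_on_iff. Qed.

Ltac lax_entries_eq0 :=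
  cbn [m1 m2 m3 m4 U1 V1 U2 V2 U2' V2'];
  rewrite ?exp_mul_eq0_iff, ?neg_exp_mul_eq0_iff, ?half_exp_mul_eq0_iff, ?neg_half_exp_mul_eq0_iff;
  intuition lra.

Section GaussMaps.
Variables (M W : R -> R -> Prop) (w H Q Rr : R -> R -> R).

Lemma GpPhi_stationary_iff (Phi1 Phi2 : R -> R -> mat2) :
  solves_L1 M w H Q Rr Phi1 Phi2 ->
  admissible M W (fun u v => m3 (Phi1 u v)) (fun u v => m3 (Phi2 u v)) ->
  (du_vanishes W (GpPhi Phi1 Phi2) <-> const_on W H 1 /\ const_on W Q 0) /\
  (dv_vanishes W (GpPhi Phi1 Phi2) <-> const_on W H 1 /\ const_on W Rr 0).
Proof.
  intros [d1 [d2 [lu1 [lv1 [lu2 lv2]]]]] [_ [WM Wnz]].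
  split; [apply du_vanishes_iff | apply dv_vanishes_iff]; intros u v Wuv;
    destruct (Wnz u v Wuv) as [z1 z2]; pose proof (WM u v Wuv) as Muv; cbn [GpPhi fst snd].
  - rewrite (is_derive_ratio13_eq0_iff _ _ _ (lax_u_frame_derive _ _ _ u v lu1 Muv) (d1 u v Muv) z1),
      (is_derive_ratio13_eq0_iff _ _ _ (lax_u_frame_derive _ _ _ u v lu2 Muv) (d2 u v Muv) z2).
    lax_entries_eq0.
  - rewrite (is_derive_ratio13_eq0_iff _ _ _ (lax_v_frame_derive _ _ _ u v lv1 Muv) (d1 u v Muv) z1),
      (is_derive_ratio13_eq0_iff _ _ _ (lax_v_frame_derive _ _ _ u v lv2 Muv) (d2 u v Muv) z2).
    lax_entries_eq0.
Qed.

Lemma GmPhi_stationary_iff (Phi1 Phi2 : R -> R -> mat2) :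
  solves_L1 M w H Q Rr Phi1 Phi2 ->
  admissible M W (fun u v => m4 (Phi1 u v)) (fun u v => m4 (Phi2 u v)) ->
  (du_vanishes W (GmPhi Phi1 Phi2) <-> const_on W H (-1) /\ const_on W Q 0) /\
  (dv_vanishes W (GmPhi Phi1 Phi2) <-> const_on W H (-1) /\ const_on W Rr 0).
Proof.
  intros [d1 [d2 [lu1 [lv1 [lu2 lv2]]]]] [_ [WM Wnz]].
  split; [apply du_vanishes_iff | apply dv_vanishes_iff]; intros u v Wuv;
    destruct (Wnz u v Wuv) as [z1 z2]; pose proof (WM u v Wuv) as Muv; cbn [GmPhi fst snd].
  - rewrite (is_derive_ratio24_eq0_iff _ _ _ (lax_u_frame_derive _ _ _ u v lu1 Muv) (d1 u v Muv) z1),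
      (is_derive_ratio24_eq0_iff _ _ _ (lax_u_frame_derive _ _ _ u v lu2 Muv) (d2 u v Muv) z2).
    lax_entries_eq0.
  - rewrite (is_derive_ratio24_eq0_iff _ _ _ (lax_v_frame_derive _ _ _ u v lv1 Muv) (d1 u v Muv) z1),
      (is_derive_ratio24_eq0_iff _ _ _ (lax_v_frame_derive _ _ _ u v lv2 Muv) (d2 u v Muv) z2).
    lax_entries_eq0.
Qed.

Lemma GpPsi_stationary_iff (Psi1 Psi2 : R -> R -> mat2) :
  solves_L2 M w H Q Rr Psi1 Psi2 ->
  admissible M W (fun u v => m3 (Psi1 u v)) (fun u v => m2 (Psi2 u v)) ->
  (du_vanishes W (GpPsi Psi1 Psi2) <-> const_on W H 1 /\ const_on W Q 0) /\
  (dv_vanishes W (GpPsi Psi1 Psi2) <-> const_on W H 1 /\ const_on W Rr 0).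
Proof.
  intros [d1 [d2 [lu1 [lv1 [lu2 lv2]]]]] [_ [WM Wnz]].
  split; [apply du_vanishes_iff | apply dv_vanishes_iff]; intros u v Wuv;
    destruct (Wnz u v Wuv) as [z1 z2]; pose proof (WM u v Wuv) as Muv; cbn [GpPsi fst snd].
  - rewrite (is_derive_ratio13_eq0_iff _ _ _ (lax_u_frame_derive _ _ _ u v lu1 Muv) (d1 u v Muv) z1),
      (is_derive_neg_ratio42_eq0_iff _ _ _ (lax_u_frame_derive _ _ _ u v lu2 Muv) (d2 u v Muv) z2).
    lax_entries_eq0.
  - rewrite (is_derive_ratio13_eq0_iff _ _ _ (lax_v_frame_derive _ _ _ u v lv1 Muv) (d1 u v Muv) z1),
      (is_derive_neg_ratio42_eq0_iff _ _ _ (lax_v_frame_derive _ _ _ u v lv2 Muv) (d2 u v Muv) z2).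
    lax_entries_eq0.
Qed.

Lemma GmPsi_stationary_iff (Psi1 Psi2 : R -> R -> mat2) :
  solves_L2 M w H Q Rr Psi1 Psi2 ->
  admissible M W (fun u v => m4 (Psi1 u v)) (fun u v => m1 (Psi2 u v)) ->
  (du_vanishes W (GmPsi Psi1 Psi2) <-> const_on W H (-1) /\ const_on W Q 0) /\
  (dv_vanishes W (GmPsi Psi1 Psi2) <-> const_on W H (-1) /\ const_on W Rr 0).
Proof.
  intros [d1 [d2 [lu1 [lv1 [lu2 lv2]]]]] [_ [WM Wnz]].
  split; [apply du_vanishes_iff | apply dv_vanishes_iff]; intros u v Wuv;
    destruct (Wnz u v Wuv) as [z1 z2]; pose proof (WM u v Wuv) as Muv; cbn [GmPsi fst snd].
  - rewrite (is_derive_ratio24_eq0_iff _ _ _ (lax_u_frame_derive _ _ _ u v lu1 Muv) (d1 u v Muv) z1),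
      (is_derive_neg_ratio31_eq0_iff _ _ _ (lax_u_frame_derive _ _ _ u v lu2 Muv) (d2 u v Muv) z2).
    lax_entries_eq0.
  - rewrite (is_derive_ratio24_eq0_iff _ _ _ (lax_v_frame_derive _ _ _ u v lv1 Muv) (d1 u v Muv) z1),
      (is_derive_neg_ratio31_eq0_iff _ _ _ (lax_v_frame_derive _ _ _ u v lv2 Muv) (d2 u v Muv) z2).
    lax_entries_eq0.
Qed.

End GaussMaps.

Theorem theorem13p1
  (M : R -> R -> Prop) (w H Q Rr : R -> R -> R)
  (Phi1 Phi2 Psi1 Psi2 : R -> R -> mat2) :
  simply_connected_domain M ->
  smooth_on M w -> smooth_on M H -> smooth_on M Q -> smooth_on M Rr ->
  solves_L1 M w H Q Rr Phi1 Phi2 ->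
  solves_L2 M w H Q Rr Psi1 Psi2 ->
  (forall W, admissible M W (fun u v => m3 (Phi1 u v)) (fun u v => m3 (Phi2 u v)) ->
     (du_vanishes W (GpPhi Phi1 Phi2) <-> const_on W H 1 /\ const_on W Q 0) /\
     (dv_vanishes W (GpPhi Phi1 Phi2) <-> const_on W H 1 /\ const_on W Rr 0)) /\
  (forall W, admissible M W (fun u v => m4 (Phi1 u v)) (fun u v => m4 (Phi2 u v)) ->
     (du_vanishes W (GmPhi Phi1 Phi2) <-> const_on W H (-1) /\ const_on W Q 0) /\
     (dv_vanishes W (GmPhi Phi1 Phi2) <-> const_on W H (-1) /\ const_on W Rr 0)) /\
  (forall W, admissible M W (fun u v => m3 (Psi1 u v)) (fun u v => m2 (Psi2 u v)) ->
     (du_vanishes W (GpPsi Psi1 Psi2) <-> const_on W H 1 /\ const_on W Q 0) /\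
     (dv_vanishes W (GpPsi Psi1 Psi2) <-> const_on W H 1 /\ const_on W Rr 0)) /\
  (forall W, admissible M W (fun u v => m4 (Psi1 u v)) (fun u v => m1 (Psi2 u v)) ->
     (du_vanishes W (GmPsi Psi1 Psi2) <-> const_on W H (-1) /\ const_on W Q 0) /\
     (dv_vanishes W (GmPsi Psi1 Psi2) <-> const_on W H (-1) /\ const_on W Rr 0)).
Proof.
  intros _ _ _ _ _ HPhi HPsi.
  split; [|split; [|split]]; intros W.
  - exact (GpPhi_stationary_iff M W w H Q Rr Phi1 Phi2 HPhi).
  - exact (GmPhi_stationary_iff M W w H Q Rr Phi1 Phi2 HPhi).
  - exact (GpPsi_stationary_iff M W w H Q Rr Psi1 Psi2 HPsi).
  - exact (GmPsi_stationary_iff M W w H Q Rr Psi1 Psi2 HPsi).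
Qed.
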